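(* Let $g_1,g_2$ be monic divisors of $x^m-1$ over $\mathbb{F}_q$, $v_1\in\mathcal{R}$, and let $\mathcal{D}_1$ be the QC code of length $2m$ generated by $(g_1,v_1g_1)$ and $(0,g_2)$. Then $\mathcal{D}_1$ is symplectic dual-containing iff $g_2\mid g_2^{\perp}(\overline{v_1}-v_1)$ and $g_2\mid g_1^{\perp}$.
   Context: $\mathcal{R}=\mathbb{F}_q[x]/(x^m-1)$, elements identified with representatives of degree $<m$; $[k]=(k_0,\dots,k_{m-1})$; $\overline{k}(x)=k(x^{-1})\bmod(x^m-1)$; $f^*(x)=x^{\deg f}f(1/x)$; for $k\in\mathcal{R}$, $f=\frac{x^m-1}{\gcd(k,x^m-1)}$, $k^{\perp}=f(0)^{-1}f^*$. ''$g\mid a$'' for $g\mid x^m-1$ means $g$ divides the representative of $a$. The QC code generated by $(u_{i1},u_{i2})$, $i=1,2$, is $\{([r_1u_{11}+r_2u_{21}],[r_1u_{12}+r_2u_{22}]):r_i\in\mathcal{R}\}\subseteq\mathbb{F}_q^{2m}$. Symplectic inner product on $\mathbb{F}_q^{2m}$: $\sum_{i=1}^m(u_iv_{m+i}-u_{m+i}v_i)$; dual-containing means $\mathcal{D}_1^{\perp_S}\subseteq\mathcal{D}_1$. *)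

From HB Require Import structures.
From mathcomp Require Import all_boot all_order all_algebra.
Set Implicit Arguments. Unset Strict Implicit. Unset Printing Implicit Defensive.
Import GRing.Theory.
Local Open Scope ring_scope.

Section QC.
Variables (F : finFieldType) (m : nat).

Definition xm1 : {poly F} := 'X^m - 1.
(* canonical representative (degree < m) of an element of R = F[x]/(x^m-1) *)
Definition red (p : {poly F}) : {poly F} := p %% xm1.
(* kbar(x) = k(x^{-1}) mod (x^m-1); in R, x^{-1} = x^{m-1} *)
Definition cyc_conj (k : {poly F}) : {poly F} := red (red k \Po 'X^(m.-1)).
Definition recip (f : {poly F}) : {poly F} :=
  \poly_(i < size f) f`_((size f).-1 - i).
Definition cyc_perp (k : {poly F}) : {poly F} :=
  let f := xm1 %/ gcdp (red k) xm1 in (f`_0)^-1 *: recip f.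
Definition rdiv (g a : {poly F}) : bool := g %| red a.
Definition cvec (k : {poly F}) : 'rV[F]_m := \row_(i < m) (red k)`_i.
Definition qc_code (u11 u12 u21 u22 : {poly F}) : 'rV[F]_(m + m) -> Prop :=
  fun w => exists r1 r2 : {poly F},
    w = row_mx (cvec (r1 * u11 + r2 * u21)) (cvec (r1 * u12 + r2 * u22)).
Definition symp (u v : 'rV[F]_(m + m)) : F :=
  \sum_(i < m) (u 0 (lshift m i) * v 0 (rshift m i)
                - u 0 (rshift m i) * v 0 (lshift m i)).
Definition symp_dual_containing (D : 'rV[F]_(m + m) -> Prop) : Prop :=
  forall v, (forall u, D u -> symp u v = 0) -> D v.
End QC.

From HB Require Import structures.
From mathcomp Require Import all_boot all_order all_algebra.
From mathcomp Require Import ring zify.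
Set Implicit Arguments. Unset Strict Implicit. Unset Printing Implicit Defensive.
Import GRing.Theory.
Local Open Scope ring_scope.

(* Write R = F[x]/(x^m - 1), h_i = (x^m - 1)/g_i and kbar(x) = k(x^-1).  The
   dot product <a, b> of coefficient vectors is invariant under the cyclic
   shift, hence <a g, b> = <a, gbar b>.  So (c, d) is symplectically orthogonal
   to D1 iff gbar2 c = 0 and gbar1 (d - vbar1 c) = 0 in R, i.e. iff c = hbar2 k2
   and d = vbar1 c + hbar1 k1.  Thus D1 is dual-containing iff it contains the
   generators (hbar2, vbar1 hbar2) and (0, hbar1) of its dual, which amounts to
   g2 | hbar2 (vbar1 - v1) and g2 | hbar1 (the latter giving g1 | hbar2 by
   symmetry).  Finally, for h = (x^m - 1)/g, g^perp is a nonzero scalar times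
   recip(h) = x^deg(h) hbar, a unit multiple of hbar in R. *)

Section CyclicRing.
Variables (F : finFieldType) (m : nat).
Hypothesis m_gt0 : (0 < m)%N.
Local Notation X1 := (xm1 F m).
Implicit Types a b c d g k p q r v w z : {poly F}.

Lemma xm1_neq0 : X1 != 0.
Proof. by rewrite -size_poly_eq0 /xm1 size_XnsubC. Qed.

Lemma size_xm1 : size X1 = m.+1.
Proof. by rewrite /xm1 size_XnsubC. Qed.

Lemma dvdp_xm1_Xn i j : X1 %| 'X^(i + j * m) - 'X^i.
Proof.
have -> : ('X^(i + j * m) : {poly F}) - 'X^i = 'X^i * ('X^m ^+ j - 1 ^+ j).
  by rewrite expr1n exprD mulnC exprM; ring.
by rewrite dvdp_mull // subrXX dvdp_mulIl.
Qed.

Lemma dvdp_sum d n (G : 'I_n -> {poly F}) :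
  (forall i, d %| G i) -> d %| \sum_(i < n) G i.
Proof.
by move=> dG; elim/big_ind: _ => [|x y|i _]; rewrite ?dvdp0 ?dG //; apply: dvdp_add.
Qed.

Lemma dvdp_cong g a b : g %| X1 -> X1 %| a - b -> (g %| a) = (g %| b).
Proof.
move=> gX /(dvdp_trans gX) gab; apply/idP/idP => ga.
  by have := dvdp_sub ga gab; rewrite opprB addrC subrK.
by have := dvdp_add ga gab; rewrite addrC subrK.
Qed.

Lemma red_small p : (size p <= m)%N -> red m p = p.
Proof. by move=> sp; rewrite /red modp_small // size_xm1 ltnS. Qed.

Lemma size_red p : (size (red m p) <= m)%N.
Proof. by rewrite -ltnS -size_xm1 ltn_modp xm1_neq0. Qed.

Lemma eq_red a b : (red m a == red m b) = (X1 %| a - b).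
Proof.
rewrite -subr_eq0 /red -modpN -modpD.
by apply/idP/idP => [/eqP/modp_eq0P|/modp_eq0P ->].
Qed.

Lemma dvdp_red_sub p : X1 %| red m p - p.
Proof. by rewrite -eq_red /red modp_id. Qed.

Lemma red_eq0 p : (red m p == 0) = (X1 %| p).
Proof. by rewrite -[p]subr0 -eq_red /red mod0p subr0. Qed.

Lemma rdivE g a : g %| X1 -> rdiv m g a = (g %| a).
Proof. by move=> gX; rewrite /rdiv /red -dvdp_mod. Qed.

(* kbar, computed without reduction: x^-1 is x^(m-1) in R. *)
Definition conjX p := p \Po 'X^(m.-1).

Lemma conjXM a b : conjX (a * b) = conjX a * conjX b.
Proof. exact: comp_polyM. Qed.

Lemma conjXB a b : conjX (a - b) = conjX a - conjX b.
Proof. exact: comp_polyB. Qed.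

Lemma dvdp_comp a p q : X1 %| p - q -> X1 %| (a \Po p) - (a \Po q).
Proof.
move=> Xpq; rewrite !comp_polyE -sumrB; apply: dvdp_sum => i.
by rewrite -scalerBr -mul_polyC dvdp_mull // subrXX dvdp_mulr.
Qed.

Lemma dvdp_conjX_xm1 : X1 %| conjX X1.
Proof.
rewrite /conjX /xm1 comp_polyB comp_Xn_poly comp_polyC -exprM.
by have := dvdp_xm1_Xn 0 m.-1; rewrite expr0 add0n mulnC.
Qed.

Lemma dvdp_conjX a : X1 %| a -> X1 %| conjX a.
Proof. by case/dvdpP => k ->; rewrite conjXM dvdp_mull // dvdp_conjX_xm1. Qed.

Lemma conjXK a : X1 %| conjX (conjX a) - a.
Proof.
rewrite /conjX -comp_polyA comp_Xn_poly -exprM -{2}[a]comp_polyXr.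
apply: dvdp_comp; have [->|m_neq1] := eqVneq m 1%N.
  by rewrite expr0 /xm1 expr1 -[1 - 'X]opprB dvdpNr.
have -> : (m.-1 * m.-1 = 1 + (m - 2) * m)%N by move: m_gt0 m_neq1; case: (m) => [|[|k]] //; lia.
by rewrite -{2}['X]expr1 dvdp_xm1_Xn.
Qed.

Lemma dvdp_conjXE a : (X1 %| conjX a) = (X1 %| a).
Proof.
apply/idP/idP => [/dvdp_conjX Xa|]; last exact: dvdp_conjX.
by have := dvdp_sub Xa (conjXK a); rewrite opprB addrC subrK.
Qed.

Lemma cyc_conjE v : X1 %| cyc_conj m v - conjX v.
Proof.
have -> : cyc_conj m v - conjX v =
    (cyc_conj m v - conjX (red m v)) + conjX (red m v - v).
  by rewrite conjXB; ring.
by rewrite dvdp_add ?dvdp_conjX ?dvdp_red_sub.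
Qed.

Definition cdot a b : F := \sum_(i < m) (red m a)`_i * (red m b)`_i.

Lemma cdotC a b : cdot a b = cdot b a.
Proof. by apply: eq_bigr => i _; rewrite mulrC. Qed.

Lemma cdot_congr a b b' : X1 %| b - b' -> cdot a b = cdot a b'.
Proof. by rewrite -eq_red /cdot => /eqP ->. Qed.

Lemma cdotDl a a' b : cdot (a + a') b = cdot a b + cdot a' b.
Proof. by rewrite /cdot /red modpD -big_split; apply: eq_bigr => i _; rewrite coefD mulrDl. Qed.

Lemma cdotZl (s : F) a b : cdot (s *: a) b = s * cdot a b.
Proof. by rewrite /cdot /red modpZl mulr_sumr; apply: eq_bigr => i _; rewrite coefZ mulrA. Qed.

Lemma cdot0l b : cdot 0 b = 0.
Proof. by rewrite -(scale0r 0) cdotZl mul0r. Qed.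

Lemma cdotBl a a' b : cdot (a - a') b = cdot a b - cdot a' b.
Proof. by rewrite cdotDl -scaleN1r cdotZl mulN1r. Qed.

Lemma cdot_suml n (G : 'I_n -> {poly F}) b :
  cdot (\sum_(i < n) G i) b = \sum_(i < n) cdot (G i) b.
Proof. by elim/big_rec2: _ => [|i s p _ <-]; rewrite ?cdot0l ?cdotDl. Qed.

Lemma cdot_dvdp_xm1 a b : X1 %| b -> cdot a b = 0.
Proof. by move=> Xb; rewrite (@cdot_congr _ _ 0) ?subr0 // cdotC cdot0l. Qed.

Lemma coef_redXM a i : (i < m)%N ->
  (red m ('X * a))`_i = if i == 0%N then (red m a)`_m.-1 else (red m a)`_i.-1.
Proof.
move=> lt_im; set a' := red m a; set c := a'`_m.-1.
set r := 'X * a' - c%:P * X1.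
have coef_r j : r`_j = (if j == 0%N then c else 0) + (if j == 0%N then 0 else a'`_j.-1)
                       - (if j == m then c else 0).
  rewrite /r coefB coefCM coefXM /xm1 coefB coefXn coefC.
  by case: (j == 0)%N (j == m) => [] [] /=; ring.
have size_r : (size r <= m)%N.
  apply/leq_sizeP => j le_mj; rewrite coef_r (gtn_eqF (leq_trans m_gt0 le_mj)) add0r.
  have [->|ne_jm] := eqVneq j m; first by rewrite subrr.
  by rewrite (nth_default 0) ?subrr //; apply: leq_trans (size_red a) _; lia.
have -> : red m ('X * a) = r.
  have -> : red m ('X * a) = red m ('X * a') by rewrite /red /a' modp_mul.
  rewrite /red (_ : 'X * a' = c%:P * X1 + r); last by rewrite /r; ring.
  by rewrite modp_addl_mul_small // size_xm1 ltnS.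
by rewrite coef_r (ltn_eqF lt_im) subr0; case: eqP; rewrite ?addr0 ?add0r.
Qed.

Lemma cdotXM a b : cdot ('X * a) ('X * b) = cdot a b.
Proof.
rewrite /cdot; case: m m_gt0 coef_redXM => // n _ coef_red.
rewrite big_ord_recl big_ord_recr /= !coef_red //= addrC; congr (_ + _).
by apply: eq_bigr => i _; rewrite !coef_red // ltnS ltn_ord.
Qed.

Lemma cdotXnM j a b : cdot ('X^j * a) ('X^j * b) = cdot a b.
Proof.
elim: j => [|j IHj]; first by rewrite !mul1r.
by rewrite exprS -!mulrA cdotXM IHj.
Qed.

Lemma cdotXnMl j a b : cdot ('X^j * a) b = cdot a ('X^(j * m.-1) * b).
Proof.
rewrite -(cdotXnM j a) mulrA -exprD; apply: cdot_congr.
have -> : (j + j * m.-1 = 0 + j * m)%N by rewrite add0n addnC -mulnSr prednK.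
by rewrite -opprB dvdpNr -[X in _ - X]mul1r -mulrBl -(expr0 'X) dvdp_mulr ?dvdp_xm1_Xn.
Qed.

Lemma cdotMl a g b : cdot (a * g) b = cdot a (conjX g * b).
Proof.
rewrite /conjX comp_polyE -{1}[g]coefK poly_def mulr_sumr mulr_suml cdot_suml.
rewrite cdotC cdot_suml; apply: eq_bigr => i _.
by rewrite -scalerAr -scalerAl !cdotZl (mulrC a) cdotXnMl -exprM mulnC cdotC.
Qed.

Lemma cdotXn i w : (i < m)%N -> cdot 'X^i w = (red m w)`_i.
Proof.
move=> lt_im; rewrite /cdot red_small ?size_polyXn // (bigD1 (Ordinal lt_im)) //=.
rewrite coefXn eqxx mul1r big1 ?addr0 // => j /= ne_ji.
by move: ne_ji; rewrite coefXn -val_eqE eq_sym => /negbTE ->; rewrite mul0r.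
Qed.

Lemma cdot_eq0 w : (forall r, cdot r w = 0) <-> X1 %| w.
Proof.
split=> [w_perp|Xw r]; last exact: cdot_dvdp_xm1.
rewrite -red_eq0; apply/eqP/polyP => i; rewrite coef0.
have [lt_im|le_mi] := ltnP i m; first by rewrite -cdotXn.
by rewrite nth_default //; apply: leq_trans (size_red w) le_mi.
Qed.

Lemma dvdp_xm1_conjXM g z : g %| X1 ->
  (X1 %| conjX g * z) <-> exists k, X1 %| z - conjX (X1 %/ g) * k.
Proof.
move=> gX; have gh : g * (X1 %/ g) = X1 by rewrite divpKC.
have g_neq0 : g != 0 by apply: contraNneq xm1_neq0 => g0; rewrite -gh g0 mul0r.
split=> [Xgz|[k Xzk]].
  have /dvdpP[k Ek] : X1 %/ g %| conjX z.
    rewrite -(dvdp_mul2l _ _ g_neq0) gh.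
    have -> : g * conjX z = conjX (conjX g * z) - (conjX (conjX g) - g) * conjX z.
      by rewrite conjXM; ring.
    by rewrite dvdp_sub ?dvdp_conjX // dvdp_mulr // conjXK.
  exists (conjX k); rewrite -opprB dvdpNr.
  by rewrite (_ : conjX (X1 %/ g) * conjX k = conjX (conjX z)) ?conjXK // Ek conjXM mulrC.
have -> : conjX g * z = conjX g * (z - conjX (X1 %/ g) * k) + conjX (g * (X1 %/ g)) * k.
  by rewrite conjXM; ring.
by rewrite gh; apply: dvdp_add; [exact: dvdp_mull | exact/dvdp_mulr/dvdp_conjX_xm1].
Qed.

Lemma dvdp_conjX_cofactor g g' : g %| X1 -> g' %| X1 ->
  g' %| conjX (X1 %/ g) -> g %| conjX (X1 %/ g').
Proof.
move=> gX g'X g'h; have gh : g * (X1 %/ g) = X1 by rewrite divpKC.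
have h_neq0 : X1 %/ g != 0 by apply: contraNneq xm1_neq0 => h0; rewrite -gh h0 mulr0.
rewrite -(dvdp_mul2r _ _ h_neq0) gh mulrC -dvdp_conjXE.
have -> : conjX (X1 %/ g * conjX (X1 %/ g')) = conjX (X1 %/ g) * (X1 %/ g')
    + conjX (X1 %/ g) * (conjX (conjX (X1 %/ g')) - X1 %/ g').
  by rewrite conjXM; ring.
apply: dvdp_add; last exact/dvdp_mull/conjXK.
by rewrite -{1}(divpKC g'X) dvdp_mul.
Qed.

Lemma dvdp_XnM g n a : g %| X1 -> (g %| 'X^n * a) = (g %| a).
Proof.
move=> gX; apply/idP/idP => [gXa|]; last exact: dvdp_mull.
have -> : a = 'X^(n * m.-1) * ('X^n * a) - ('X^(0 + n * m) - 'X^0) * a.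
  have e : (n * m.-1 + n = 0 + n * m)%N by rewrite add0n -mulnSr prednK.
  by rewrite mulrA -exprD e expr0; ring.
apply: dvdp_sub; first exact: dvdp_mull.
by apply/dvdp_mulr/(dvdp_trans gX)/dvdp_xm1_Xn.
Qed.

Lemma recip_conjX p : X1 %| recip p - 'X^((size p).-1) * conjX p.
Proof.
rewrite /recip /conjX comp_polyE poly_def mulr_sumr.
rewrite [X in _ - X](reindex_inj rev_ord_inj) -sumrB; apply: dvdp_sum => i /=.
rewrite -scalerAr -exprM -exprD; set n := (size p).-1.
have le_in : (i <= n)%N by rewrite /n -ltnS (ltn_predK (ltn_ord i)).
have -> : (size p - i.+1 = n - i)%N by rewrite /n; lia.
rewrite -scalerBr -mul_polyC dvdp_mull //.
have -> : (n + m.-1 * (n - i) = i + (n - i) * m)%N.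
  by rewrite -{2}(prednK m_gt0) mulnS mulnC addnA subnKC.
by rewrite -opprB dvdpNr dvdp_xm1_Xn.
Qed.

Lemma coef0_dvdp_xm1 d : d %| X1 -> d`_0 != 0.
Proof.
case/dvdpP=> k Ek; apply/negP => /eqP d0.
have : X1.[0] = k.[0] * d.[0] by rewrite Ek hornerM.
rewrite [d.[0]]horner_coef0 d0 mulr0 /xm1 !hornerE expr0n (gtn_eqF m_gt0) /=.
by rewrite sub0r => /eqP; rewrite oppr_eq0 oner_eq0.
Qed.

Lemma recipZ (s : F) p : s != 0 -> recip (s *: p) = s *: recip p.
Proof.
move=> s_neq0; rewrite /recip size_scale //; apply/polyP => i.
by rewrite coefZ !coef_poly; case: ifP; rewrite ?coefZ ?mulr0.
Qed.

Lemma cyc_perpE g : g %| X1 -> exists2 s : F, s != 0 & cyc_perp m g = s *: recip (X1 %/ g).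
Proof.
move=> gX; set G := gcdp (red m g) X1.
have /eqpP[[s1 s2] /andP[/= s1_neq0 s2_neq0] Es] : X1 %/ G %= X1 %/ g.
  exact/eqp_divr/(eqp_trans (gcdp_modl g X1))/dvdp_gcd_idl.
have h'X : X1 %/ G %| X1 by apply/dvdpP; exists G; rewrite divpKC // dvdp_gcdr.
have Eh' : X1 %/ G = (s2 / s1) *: (X1 %/ g).
  by rewrite mulrC -scalerA -Es scalerA mulVf ?scale1r.
have r_neq0 : s2 / s1 != 0 by rewrite mulf_neq0 ?invr_eq0.
exists (((X1 %/ G)`_0)^-1 * (s2 / s1)); first by rewrite mulf_neq0 ?invr_eq0 ?coef0_dvdp_xm1.
by rewrite /cyc_perp -/G {2}Eh' recipZ // scalerA.
Qed.

Lemma dvdp_recipM g p a : g %| X1 -> (g %| recip p * a) = (g %| conjX p * a).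
Proof.
move=> gX; rewrite -(dvdp_XnM (size p).-1 (conjX p * a) gX) mulrA; apply: dvdp_cong => //.
by rewrite -mulrBl dvdp_mulr // recip_conjX.
Qed.

Lemma dvdp_cyc_perpM g g' a : g %| X1 -> g' %| X1 ->
  (g %| cyc_perp m g' * a) = (g %| conjX (X1 %/ g') * a).
Proof.
by move=> gX /cyc_perpE[s s_neq0 ->]; rewrite -scalerAl dvdpZr // dvdp_recipM.
Qed.

Lemma eq_cvec a b : cvec m a = cvec m b <-> X1 %| a - b.
Proof.
rewrite -eq_red; split=> [Eab|/eqP Eab]; last by rewrite /cvec Eab.
apply/eqP/polyP => i; have [lt_im|le_mi] := ltnP i m.
  by have := congr1 (fun v : 'rV_m => v 0 (Ordinal lt_im)) Eab; rewrite !mxE.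
by rewrite !nth_default //; apply: leq_trans (size_red _) le_mi.
Qed.

Lemma cvec_surj (w : 'rV[F]_m) : exists c, w = cvec m c.
Proof.
exists (\poly_(i < m) w 0 (insubd (Ordinal m_gt0) i)).
apply/rowP => i; rewrite mxE red_small ?size_poly // coef_poly ltn_ord.
by congr (w 0 _); apply: val_inj; rewrite insubdK //; apply: ltn_ord.
Qed.

Lemma symp_cvec a b c d :
  symp (row_mx (cvec m a) (cvec m b)) (row_mx (cvec m c) (cvec m d)) = cdot a d - cdot b c.
Proof. by rewrite /symp /cdot -sumrB; apply: eq_bigr => i _; rewrite !row_mxEl !row_mxEr !mxE. Qed.

Section DualContaining.
Variables g1 g2 v1 : {poly F}.
Hypotheses (g1X : g1 %| X1) (g2X : g2 %| X1).
Local Notation D1 := (@qc_code F m g1 (v1 * g1) 0 g2).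
Local Notation h1 := (X1 %/ g1).
Local Notation h2 := (X1 %/ g2).

Definition code_pair c d := exists r1 r2,
  X1 %| c - r1 * g1 /\ X1 %| d - (r1 * (v1 * g1) + r2 * g2).

Lemma qc_code_cvec c d : D1 (row_mx (cvec m c) (cvec m d)) <-> code_pair c d.
Proof.
split=> [[r1 [r2 /eq_row_mx[/eq_cvec Ec /eq_cvec Ed]]]|[r1 [r2 [Ec Ed]]]].
  by exists r1, r2; rewrite mulr0 addr0 in Ec.
by exists r1, r2; rewrite mulr0 addr0; congr row_mx; apply/eq_cvec.
Qed.

Lemma code_pair_cong c d c' d' :
  X1 %| c - c' -> X1 %| d - d' -> code_pair c' d' -> code_pair c d.
Proof.
move=> Xc Xd [r1 [r2 [Ec Ed]]]; exists r1, r2.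
have shift x x' y : X1 %| x - x' -> X1 %| x' - y -> X1 %| x - y.
  by move=> Xx Xy; rewrite -[x](subrK x') -addrA dvdp_add.
by split; [apply: shift Ec | apply: shift Ed].
Qed.

Lemma symp_orthogonal_cvec c d :
  (forall u, D1 u -> symp u (row_mx (cvec m c) (cvec m d)) = 0) <->
  X1 %| conjX g2 * c /\ X1 %| conjX g1 * (d - conjX v1 * c).
Proof.
have cdotBr r x y : cdot r x - cdot r y = cdot r (x - y) by rewrite !(cdotC r) cdotBl.
split=> [orth|[Xc Xd] u [r1 [r2 ->]]].
  split; apply/cdot_eq0 => r.
    have := orth _ (ex_intro _ 0 (ex_intro _ r erefl)).
    rewrite symp_cvec !mul0r !add0r mulr0 cdot0l sub0r cdotMl.
    by move/eqP; rewrite oppr_eq0 => /eqP.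
  have := orth _ (ex_intro _ r (ex_intro _ 0 erefl)).
  by rewrite symp_cvec !mul0r !addr0 !cdotMl cdotBr conjXM mulrBr mulrCA mulrA.
rewrite symp_cvec mulr0 addr0 cdotDl !cdotMl (cdot_dvdp_xm1 r2 Xc) addr0.
by rewrite conjXM -mulrA mulrCA cdotBr -mulrBr cdot_dvdp_xm1.
Qed.

Lemma dual_containing_code_pair : symp_dual_containing D1 <->
  forall k1 k2, code_pair (conjX h2 * k2) (conjX v1 * (conjX h2 * k2) + conjX h1 * k1).
Proof.
split=> [DC k1 k2|gen w orth].
  apply/qc_code_cvec/DC/symp_orthogonal_cvec.
  split; apply/dvdp_xm1_conjXM => //; [exists k2 | exists k1].
    by rewrite subrr dvdp0.
  by rewrite (addrC (conjX v1 * _)) addrK subrr dvdp0.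
have [c Ec] := cvec_surj (lsubmx w); have [d Ed] := cvec_surj (rsubmx w).
move: orth; rewrite -(hsubmxK w) Ec Ed => /symp_orthogonal_cvec[Xc Xd].
have [k2 Ek2] := (dvdp_xm1_conjXM c g2X).1 Xc.
have [k1 Ek1] := (dvdp_xm1_conjXM (d - conjX v1 * c) g1X).1 Xd.
apply/qc_code_cvec/(code_pair_cong Ek2 _ (gen k1 k2)).
have -> : d - (conjX v1 * (conjX h2 * k2) + conjX h1 * k1) =
    (d - conjX v1 * c - conjX h1 * k1) + conjX v1 * (c - conjX h2 * k2) by ring.
by rewrite dvdp_add // dvdp_mull.
Qed.

Lemma code_pair_generators :
  (forall k1 k2, code_pair (conjX h2 * k2) (conjX v1 * (conjX h2 * k2) + conjX h1 * k1)) <->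
  g2 %| conjX h2 * (conjX v1 - v1) /\ g2 %| conjX h1.
Proof.
have g2_dvd x : X1 %| x -> g2 %| x by apply: dvdp_trans.
split=> [gen|[g2v g2h1] k1 k2].
  split.
    have [r1 [r2 []]] := gen 0 1; rewrite !mulr0 !mulr1 addr0 => /g2_dvd E1 /g2_dvd E2.
    have -> : conjX h2 * (conjX v1 - v1) = (conjX v1 * conjX h2 - (r1 * (v1 * g1) + r2 * g2))
        + r2 * g2 - v1 * (conjX h2 - r1 * g1) by ring.
    apply: dvdp_sub; last exact: dvdp_mull.
    by apply: dvdp_add => //; apply: dvdp_mulIr.
  have [r1 [r2 []]] := gen 1 0; rewrite !mulr0 !mulr1 !add0r dvdpNr => /g2_dvd E1 /g2_dvd E2.
  have -> : conjX h1 = (conjX h1 - (r1 * (v1 * g1) + r2 * g2)) + r2 * g2 + v1 * (r1 * g1) by ring.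
  apply: dvdp_add; last exact: dvdp_mull.
  by apply: dvdp_add => //; apply: dvdp_mulIr.
have /dvdpP[t Et] := dvdp_conjX_cofactor g1X g2X g2h1.
set d := conjX v1 * (conjX h2 * k2) + conjX h1 * k1.
have g2d : g2 %| d - k2 * t * (v1 * g1).
  have -> : d - k2 * t * (v1 * g1) = conjX h2 * (conjX v1 - v1) * k2 + conjX h1 * k1.
    by rewrite /d Et; ring.
  by apply: dvdp_add; apply: dvdp_mulr.
exists (k2 * t), ((d - k2 * t * (v1 * g1)) %/ g2); rewrite divpK // Et.
by split; rewrite (_ : _ - _ = 0) ?dvdp0 //; ring.
Qed.

End DualContaining.
End CyclicRing.

Theorem mainTheorem9 (F : finFieldType) (m : nat) (g1 g2 v1 : {poly F}) :
  (0 < m)%N ->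
  g1 \is monic -> g1 %| xm1 F m ->
  g2 \is monic -> g2 %| xm1 F m ->
  symp_dual_containing (@qc_code F m g1 (v1 * g1) 0 g2) <->
  (rdiv m g2 (cyc_perp m g2 * (cyc_conj m v1 - v1)) /\ rdiv m g2 (cyc_perp m g1)).
Proof.
move=> m_gt0 _ g1X _ g2X.
have conj_v1 a : (g2 %| a * (cyc_conj m v1 - v1)) = (g2 %| a * (conjX m v1 - v1)).
  apply: (dvdp_cong g2X).
  by rewrite (_ : _ - _ = a * (cyc_conj m v1 - conjX m v1)) ?dvdp_mull ?cyc_conjE //; ring.
rewrite (dual_containing_code_pair m_gt0 v1 g1X g2X) code_pair_generators //.
by rewrite !rdivE // conj_v1 -[cyc_perp m g1]mulr1 !dvdp_cyc_perpM // mulr1.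
Qed.
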